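(* Let $K=\mathbb{C}_p$, let $F=(F_1,\dots,F_N):\mathbb{A}^N_K\to\mathbb{A}^N_K$ be a lift of $p$-th power, and let $\varpi\in K^\circ$ with $|p|\le|\varpi|<1$. Assume that for each $i$, \[F_i=G_i^p+\varpi f_i,\] where $f_i\in K^\circ[X_1,\dots,X_N]$ has degree smaller than the degree of $G_i^p$, and $G_i$ is of the form \[G_i(X_1,\dots,X_N)=\sum_{j=1}^{m_i}c_{i,j}X_i^{q_{i,j}}\] with $c_{i,j}\in K^\circ\setminus K^{\circ\circ}$, $m_i\in\mathbb{N}$, and each $q_{i,j}$ a power of $p$ with $q_{i,j}>q_{i,j'}$ whenever $j>j'$. Then $F$ is a restricted lift of $p$-th power.
   Context: $K=\mathbb{C}_p$ with absolute value $|\cdot|$, valuation ring $K^\circ=\{|x|\le1\}$ and maximal ideal $K^{\circ\circ}=\{|x|<1\}$. For $X=(X_1,\dots,X_N)$ write $\|X\|=\max_i|X_i|$. A morphism $F=(F_1,\dots,F_N)$ with $F_i\in K^\circ[X_1,\dots,X_N]$ is a lift of $p$-th power if there exist $\varpi\in K^\circ$ with $|p|\le|\varpi|<1$ and $G_i\in K^\circ[X_1,\dots,X_N]$ with $F_i\equiv G_i^p\pmod{\varpi}$ for all $i$; it is a restricted lift of $p$-th power if moreover $F$ maps $K^N\setminus(K^\circ)^N$ into $K^N\setminus(K^\circ)^N$ and $\|F(x)\|>\|x\|$ for all $x\in K^N\setminus(K^\circ)^N$. *)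

From HB Require Import structures.
From mathcomp Require Import all_boot all_order all_algebra all_field.
From mathcomp Require Export mpoly.
Set Implicit Arguments. Unset Strict Implicit. Unset Printing Implicit Defensive.
Import Order.TTheory GRing.Theory Num.Theory.
Local Open Scope ring_scope.

Section Defs.
Variables (R : realFieldType) (K : closedFieldType) (abs : K -> R).

(* Axioms of a field K playing the role of C_p: an algebraically closed field
   of characteristic 0 with a complete non-archimedean absolute value
   normalised by |p| = 1/p. *)
Definition cauchy_seq (u : nat -> K) :=
  forall e : R, 0 < e -> exists n0, forall m n, (n0 <= m)%N -> (n0 <= n)%N ->
    abs (u m - u n) < e.
Definition converges_to (u : nat -> K) (l : K) :=
  forall e : R, 0 < e -> exists n0, forall n, (n0 <= n)%N -> abs (u n - l) < e.

Definition Cp_model (p : nat) :=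
  (forall x, abs x = 0 <-> x = 0) /\
  (forall x, 0 <= abs x) /\
  (forall x y, abs (x * y) = abs x * abs y) /\
  (forall x y, abs (x + y) <= Num.max (abs x) (abs y)) /\
  (forall n : nat, (0 < n)%N -> n%:R != 0 :> K) /\
  abs p%:R = (p%:R)^-1 /\
  (forall u, cauchy_seq u -> exists l, converges_to u l).

Definition in_Ko (x : K) := abs x <= 1.
Definition in_Ko_not_Koo (x : K) := abs x <= 1 /\ ~ (abs x < 1).

Variable N : nat.

Definition poly_over_Ko (P : {mpoly K[N]}) := forall m, in_Ko (P@_m).

Definition cong_mod (w : K) (P Q : {mpoly K[N]}) :=
  exists H, poly_over_Ko H /\ P - Q = w *: H.

Definition vnorm (x : 'I_N -> K) : R := \big[Num.max/0]_(i < N) abs (x i).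

Definition in_Ko_N (x : 'I_N -> K) := forall i, in_Ko (x i).

Definition eval_map (F : 'I_N -> {mpoly K[N]}) (x : 'I_N -> K) : 'I_N -> K :=
  fun i => (F i).@[x].

Definition lift_of_pth_power (p : nat) (F : 'I_N -> {mpoly K[N]}) :=
  (forall i, poly_over_Ko (F i)) /\
  exists w : K, [/\ in_Ko w, abs p%:R <= abs w, abs w < 1 &
    exists G : 'I_N -> {mpoly K[N]},
      forall i, poly_over_Ko (G i) /\ cong_mod w (F i) (G i ^+ p)].

Definition restricted_lift_of_pth_power (p : nat) (F : 'I_N -> {mpoly K[N]}) :=
  lift_of_pth_power p F /\
  forall x : 'I_N -> K, ~ in_Ko_N x ->
    ~ in_Ko_N (eval_map F x) /\ vnorm x < vnorm (eval_map F x).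

End Defs.

From HB Require Import structures.
From mathcomp Require Import all_boot all_order all_algebra all_field.
From mathcomp Require Import mpoly.
From mathcomp Require Import zify.
Set Implicit Arguments.
Unset Strict Implicit.
Unset Printing Implicit Defensive.

Import Order.TTheory GRing.Theory Num.Theory.
Local Open Scope ring_scope.

(* Pick a coordinate i with |x_i| = ||x|| = r > 1.  In G_i(x) the monomials
   c_{i,j} x_i^{q_{i,j}} have pairwise distinct absolute values r^{q_{i,j}}, so
   by the ultrametric inequality |G_i(x)| = r^Q for the top exponent Q >= 1.
   Since f_i has coefficients in K° and degree < pQ, |w f_i(x)| < r^{pQ}, hence
   |F_i(x)| = |G_i(x)|^p = r^{pQ} > r. *)

Lemma msize_exp n (R : idomainType) (P : {mpoly R[n]}) k :
  (msize (P ^+ k)).-1 = ((msize P).-1 * k)%N.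
Proof.
have [->|P_neq0] := eqVneq P 0.
  by case: k => [|k]; rewrite ?expr0 ?msize1 ?expr0n ?msize0 ?muln0.
have P_gt0 : (0 < msize P)%N by rewrite lt0n msize_poly_eq0.
elim: k => [|k IH]; first by rewrite expr0 msize1 muln0.
have : (0 < msize (P ^+ k))%N by rewrite lt0n msize_poly_eq0 expf_neq0.
rewrite exprS msizeM ?expf_neq0 //; lia.
Qed.

Lemma msize_sum_Xpow n (R : nzRingType) (i : 'I_n) m (c : nat -> R)
    (q : nat -> nat) d :
  (forall j, (j < m)%N -> (q j <= d)%N) ->
  (msize (\sum_(j < m) c j *: 'X_i ^+ q j) <= d.+1)%N.
Proof.
move=> q_le; apply: leq_trans (msize_sum _ _ _) _; apply/bigmax_leqP => j _.
apply: leq_trans (msizeZ_le _ _) _.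
by rewrite mpolyXn msizeX mdegMn mdeg1 mul1n ltnS q_le.
Qed.

Section Ultrametric.
Variables (R : realFieldType) (K : fieldType) (abs : K -> R).
Hypotheses (abs_eq0 : forall x, abs x = 0 <-> x = 0)
  (abs_ge0 : forall x, 0 <= abs x)
  (absM : forall x y, abs (x * y) = abs x * abs y)
  (abs_add_le_max : forall x y, abs (x + y) <= Num.max (abs x) (abs y)).

Lemma abs0 : abs 0 = 0. Proof. exact/abs_eq0. Qed.

Lemma abs1 : abs 1 = 1.
Proof.
have abs1_neq0 : abs 1 != 0 by apply/eqP => /abs_eq0/eqP; rewrite oner_eq0.
by apply: (mulIf abs1_neq0); rewrite -absM !mul1r.
Qed.

Lemma absX x k : abs (x ^+ k) = abs x ^+ k.
Proof. by elim: k => [|k IH]; rewrite ?expr0 ?abs1 // !exprS absM IH. Qed.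

Lemma absN x : abs (- x) = abs x.
Proof.
have absN1 : abs (-1) = 1.
  apply/eqP; rewrite -(eqrXn2 (_ : 0 < 2)%N) ?abs_ge0 ?ler01 //.
  by rewrite -absX sqrrN !expr1n abs1.
by rewrite -mulN1r absM absN1 mul1r.
Qed.

Lemma abs_prod (I : Type) (r : seq I) (P : pred I) (F : I -> K) :
  abs (\prod_(i <- r | P i) F i) = \prod_(i <- r | P i) abs (F i).
Proof. exact: (big_morph abs absM abs1). Qed.

Lemma abs_addr_dominated a b : abs b < abs a -> abs (a + b) = abs a.
Proof.
move=> lt_ba; apply/eqP; rewrite eq_le; apply/andP; split.
  by apply: le_trans (abs_add_le_max a b) _; rewrite ge_max lexx ltW.
have := abs_add_le_max (a + b) (- b); rewrite addrK absN le_max => /orP[] //.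
by move/(lt_le_trans lt_ba); rewrite ltxx.
Qed.

Lemma abs_sum_le (I : Type) (r : seq I) (P : pred I) (F : I -> K) B :
  0 <= B -> (forall i, P i -> abs (F i) <= B) ->
  abs (\sum_(i <- r | P i) F i) <= B.
Proof.
move=> B_ge0 F_le; apply: (big_ind (fun y => abs y <= B)) => //.
  by rewrite abs0.
move=> y z y_le z_le; apply: le_trans (abs_add_le_max y z) _.
by rewrite ge_max y_le.
Qed.

Lemma abs_sum_increasing_powers (y : K) (a : nat -> K) (e : nat -> nat) n :
  1 < abs y -> (forall j, (j <= n)%N -> abs (a j) = 1) ->
  (forall j j', (j' < j <= n)%N -> (e j' < e j)%N) ->
  abs (\sum_(j < n.+1) a j * y ^+ e j) = abs y ^+ e n.
Proof.
move=> y_gt1; elim: n => [|n IH] a_unit e_incr.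
  by rewrite big_ord1 absM a_unit // mul1r absX.
rewrite big_ord_recr /= addrC abs_addr_dominated absM a_unit // mul1r absX //.
rewrite IH ?ltr_eXn2l ?e_incr ?leqnn //.
- by move=> j le_jn; rewrite a_unit // ltnW.
- by move=> j j' /andP[lt_j'j le_jn]; rewrite e_incr // lt_j'j ltnW.
Qed.

Lemma abs_meval_le n (P : {mpoly K[n]}) (x : 'I_n -> K) (r : R) :
  1 <= r -> (forall m, abs P@_m <= 1) -> (forall i, abs (x i) <= r) ->
  abs P.@[x] <= r ^+ (msize P).-1.
Proof.
move=> r_ge1 P_le1 x_le; rewrite mevalE big_seq.
apply: abs_sum_le => [|m m_supp].
  by rewrite exprn_ge0 // (le_trans ler01).
rewrite absM abs_prod -[leRHS]mul1r; apply: ler_pM => //.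
  exact: prodr_ge0.
apply: (@le_trans _ _ (r ^+ mdeg m)).
  rewrite mdegE -prodrXr; apply: ler_prod => i _.
  by rewrite absX exprn_ge0 // lerXn2r ?nnegrE // (le_trans ler01).
by apply: ler_weXn2l => //; have := msize_mdeg_lt m_supp; lia.
Qed.

Lemma abs_meval_sum_Xpow n (i : 'I_n) (x : 'I_n -> K) m (c : nat -> K)
    (q : nat -> nat) :
  (0 < m)%N -> 1 < abs (x i) -> (forall j, (j < m)%N -> abs (c j) = 1) ->
  (forall j j', (j' < j < m)%N -> (q j' < q j)%N) ->
  abs (\sum_(j < m) c j *: 'X_i ^+ q j).@[x] = abs (x i) ^+ q m.-1.
Proof.
case: m => // m _ x_gt1 c_unit q_incr.
rewrite raddf_sum /=.
rewrite -(abs_sum_increasing_powers (a := c) (e := q) (n := m) x_gt1) //.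
by congr abs; apply: eq_bigr => j _; rewrite mevalZ rmorphXn /= mevalXU.
Qed.

Lemma abs_meval_lift_component n p (i : 'I_n) (x : 'I_n -> K) (w : K)
    (G f : {mpoly K[n]}) m (c : nat -> K) (q : nat -> nat) :
  G = \sum_(j < m) c j *: 'X_i ^+ q j ->
  (1 < p)%N -> 1 < abs (x i) -> (forall j, abs (x j) <= abs (x i)) ->
  abs w <= 1 -> (forall mm, abs f@_mm <= 1) ->
  (forall j, (j < m)%N -> abs (c j) = 1) ->
  (forall j, (j < m)%N -> (0 < q j)%N) ->
  (forall j j', (j' < j < m)%N -> (q j' < q j)%N) ->
  (msize f < msize (G ^+ p))%N ->
  exists2 e, (1 < e)%N & abs (G ^+ p + w *: f).@[x] = abs (x i) ^+ e.
Proof.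
set r := abs (x i).
move=> defG p_gt1 r_gt1 x_le w_le1 f_le1 c_unit q_gt0 q_incr size_f.
have m_gt0 : (0 < m)%N.
  rewrite lt0n; apply: contraTneq size_f => m0.
  by rewrite defG m0 big_ord0 expr0n gtn_eqF ?(ltnW p_gt1) // msize0.
set Q := q m.-1.
have Q_gt0 : (0 < Q)%N by rewrite q_gt0 // prednK.
have size_G : (msize G <= Q.+1)%N.
  rewrite defG; apply: msize_sum_Xpow => j j_lt; rewrite /Q.
  have [->|j_neq] := eqVneq j m.-1; first by [].
  by apply/ltnW/q_incr; lia.
have absG : abs G.@[x] = r ^+ Q by rewrite defG; apply: abs_meval_sum_Xpow.
have small : abs (w *: f).@[x] < r ^+ (p * Q).
  rewrite mevalZ absM; apply: le_lt_trans (ler_piMl (abs_ge0 _) w_le1) _.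
  apply: le_lt_trans (abs_meval_le (ltW r_gt1) f_le1 x_le) _.
  rewrite ltr_eXn2l //.
  have size_Gp : ((msize (G ^+ p)).-1 <= Q * p)%N.
    by rewrite msize_exp leq_mul // -subn1 leq_subLR add1n.
  nia.
have absGp : abs (G.@[x] ^+ p) = r ^+ (p * Q).
  by rewrite absX absG -exprM mulnC.
exists (p * Q)%N; first nia.
by rewrite mevalD rmorphXn /= abs_addr_dominated absGp.
Qed.

End Ultrametric.

Lemma vnorm_outside_unit_ball (R : realFieldType) (K : closedFieldType)
    (abs : K -> R) n (x : 'I_n -> K) :
  (forall y, 0 <= abs y) -> ~ in_Ko_N abs x ->
  exists2 i, 1 < abs (x i) & vnorm abs x = abs (x i).
Proof.
move=> abs_ge0 x_out.
have [j x_gt1] : exists j, 1 < abs (x j).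
  case: (boolP [exists j, 1 < abs (x j)]) => [/existsP //|/existsPn x_le1].
  by case: x_out => j; rewrite /in_Ko leNgt x_le1.
have [i _ norm_x] := @eq_bigmax _ _ _ 0 j predT (fun k => abs (x k)) isT
  (fun k _ => abs_ge0 _).
exists i => //; rewrite -norm_x; apply: lt_le_trans x_gt1 _; exact: le_bigmax.
Qed.

Theorem mainTheorem4 (p N : nat) (R : realFieldType) (K : closedFieldType)
  (abs : K -> R) (F : 'I_N -> {mpoly K[N]}) (w : K)
  (G f : 'I_N -> {mpoly K[N]}) (m : 'I_N -> nat)
  (c : 'I_N -> nat -> K) (q : 'I_N -> nat -> nat) :
  prime p -> Cp_model abs p ->
  lift_of_pth_power abs p F ->
  in_Ko abs w -> abs p%:R <= abs w -> abs w < 1 ->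
  (forall i, F i = G i ^+ p + w *: f i) ->
  (forall i, poly_over_Ko abs (f i)) ->
  (forall i, (msize (f i) < msize (G i ^+ p))%N) ->
  (forall i, G i = \sum_(j < m i) c i j *: 'X_i ^+ q i j) ->
  (forall i j, (j < m i)%N -> in_Ko_not_Koo abs (c i j)) ->
  (forall i j, (j < m i)%N -> exists k, q i j = (p ^ k)%N) ->
  (forall i j j', (j' < j)%N -> (j < m i)%N -> (q i j' < q i j)%N) ->
  restricted_lift_of_pth_power abs p F.
Proof.
move=> p_prime [abs_eq0 [abs_ge0 [absM [abs_max _]]]] lift w_Ko _ _ defF f_Ko
  size_f defG c_Ko q_pow q_incr.
split=> // x x_out.
have [i x_gt1 norm_x] := vnorm_outside_unit_ball abs_ge0 x_out.
have x_le j : abs (x j) <= abs (x i) by rewrite -norm_x; apply: le_bigmax.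
have c_unit j : (j < m i)%N -> abs (c i j) = 1.
  case/(c_Ko i) => c_le1 /negP; rewrite -leNgt => c_ge1.
  by apply/eqP; rewrite eq_le c_le1.
have q_gt0 j : (j < m i)%N -> (0 < q i j)%N.
  by case/(q_pow i) => k ->; rewrite expn_gt0 prime_gt0.
have q_incr' j j' : (j' < j < m i)%N -> (q i j' < q i j)%N.
  by case/andP; apply: q_incr.
have [e e_gt1] := abs_meval_lift_component abs_eq0 abs_ge0 absM abs_max
  (defG i) (prime_gt1 p_prime) x_gt1 x_le w_Ko (f_Ko i) c_unit q_gt0 q_incr'
  (size_f i).
rewrite -defF => absFx.
have lt_xFx : abs (x i) < abs (F i).@[x] by rewrite absFx ltr_eXnr.
split.
- by move/(_ i); rewrite /in_Ko /eval_map leNgt (lt_trans x_gt1 lt_xFx).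
- by rewrite norm_x (lt_le_trans lt_xFx) //; apply: le_bigmax.
Qed.
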